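(* Let $n\ge 2k\ge 2$. The Kneser graph $K(n,k)$ admits perfect state transfer if and only if $n=2k$.
   Context: The Kneser graph $K(n,k)$ has as vertices the $k$-subsets of $\{1,\ldots,n\}$, two being adjacent iff they are disjoint. For a simple graph $X$ with adjacency matrix $A$, let $\mathcal{H}_X(t)=e^{itA}$. $X$ admits perfect state transfer (PST) from a vertex $u$ to a vertex $v\neq u$ at time $\tau>0$ if $|\mathcal{H}_X(\tau)_{u,v}|=1$; $X$ admits PST if this happens for some $u\ne v$ and some $\tau>0$. *)

From Stdlib Require Import Reals List Arith Bool.
Import ListNotations.
Open Scope R_scope.

(* (A^m)_{u,v} = number of walks of length m from u to v *)
Fixpoint walks {T : Type} (eqdec : forall x y : T, {x = y} + {x <> y})
  (V : list T) (adj : T -> T -> bool) (m : nat) (u v : T) : nat :=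
  match m with
  | O => if eqdec u v then 1%nat else 0%nat
  | S m' => fold_right Nat.add 0%nat
              (map (fun w => if adj u w then walks eqdec V adj m' w v else 0%nat) V)
  end.

Definition ipow_re (m : nat) : R :=
  match (m mod 4)%nat with 0%nat => 1 | 2%nat => -1 | _ => 0 end.
Definition ipow_im (m : nat) : R :=
  match (m mod 4)%nat with 1%nat => 1 | 3%nat => -1 | _ => 0 end.

(* H_X(t)_{u,v} = (e^{itA})_{u,v} = sum_m (i t)^m (A^m)_{u,v} / m!,
   given by its real part re and imaginary part im *)
Definition transition_entry {T : Type} (eqdec : forall x y : T, {x = y} + {x <> y})
  (V : list T) (adj : T -> T -> bool) (t : R) (u v : T) (re im : R) : Prop :=
  infinite_sum (fun m => ipow_re m * t ^ m / INR (fact m) * INR (walks eqdec V adj m u v)) re /\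
  infinite_sum (fun m => ipow_im m * t ^ m / INR (fact m) * INR (walks eqdec V adj m u v)) im.

Definition PST_at {T : Type} (eqdec : forall x y : T, {x = y} + {x <> y})
  (V : list T) (adj : T -> T -> bool) (u v : T) (tau : R) : Prop :=
  In u V /\ In v V /\ u <> v /\ 0 < tau /\
  exists re im, transition_entry eqdec V adj tau u v re im /\ re ^ 2 + im ^ 2 = 1.

Definition admits_PST {T : Type} (eqdec : forall x y : T, {x = y} + {x <> y})
  (V : list T) (adj : T -> T -> bool) : Prop :=
  exists u v tau, PST_at eqdec V adj u v tau.

(* A subset of {1,...,n} is encoded by its characteristic bool list of length n
   (position i <-> element i+1). *)
Fixpoint all_bool_lists (n : nat) : list (list bool) :=
  match n with
  | O => [[]]
  | S n' => map (cons true) (all_bool_lists n') ++ map (cons false) (all_bool_lists n')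
  end.

Definition card_true (l : list bool) : nat := length (filter (fun b => b) l).

Definition kneser_vertices (n k : nat) : list (list bool) :=
  filter (fun l => Nat.eqb (card_true l) k) (all_bool_lists n).

Definition disjointb (u v : list bool) : bool :=
  forallb (fun p => negb (fst p && snd p)) (combine u v).

Definition bl_eqdec : forall x y : list bool, {x = y} + {x <> y} :=
  list_eq_dec bool_dec.

Definition Kneser_admits_PST (n k : nat) : Prop :=
  admits_PST bl_eqdec (kneser_vertices n k) disjointb.

(* [exp (itA)] is unitary: the column norms [sum_u |exp(itA)_{uv}|^2] have zero derivative
   because [A] is symmetric, and equal 1 at [t = 0].  It also commutes with graph automorphisms.
   If [n > 2k] and [u <> v] are k-subsets, some transposition of two coordinates fixes [v] and
   moves [u]; it is an automorphism of [K(n,k)], so [|exp(itA)_{uv}| = |exp(itA)_{su,v}|] and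
   unitarity bounds [|exp(itA)_{uv}|^2] by [1/2].  If [n = 2k], [K(n,k)] is a perfect matching of
   each set with its complement [c], [exp(itA)_{uc} = i sin t], and the transfer is perfect at
   [t = pi/2]. *)

From Stdlib Require Import Reals List Arith.
From Stdlib Require Import Bool Lia Lra Permutation Classical.
From Coquelicot Require Import Coquelicot.

Open Scope R_scope.

Definition rsum {A : Type} (f : A -> R) (l : list A) : R :=
  fold_right (fun x acc => f x + acc) 0 l.

Lemma rsum_ext {A} (f g : A -> R) l :
  (forall x, In x l -> f x = g x) -> rsum f l = rsum g l.
Proof.
  induction l as [|a l IH]; intros H; simpl; auto.
  rewrite (H a) by (left; reflexivity).
  rewrite IH; [reflexivity|]. intros x Hx; apply H; right; exact Hx.
Qed.

Lemma rsum_plus {A} (f g : A -> R) l :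
  rsum (fun x => f x + g x) l = rsum f l + rsum g l.
Proof. induction l; simpl; lra. Qed.

Lemma rsum_scal {A} c (f : A -> R) l : rsum (fun x => c * f x) l = c * rsum f l.
Proof. induction l; simpl; lra. Qed.

Lemma rsum_swap {A B} (F : A -> B -> R) l1 l2 :
  rsum (fun x => rsum (F x) l2) l1 = rsum (fun y => rsum (fun x => F x y) l1) l2.
Proof.
  induction l1 as [|a l1 IH]; simpl.
  - induction l2; simpl; lra.
  - rewrite IH, <- rsum_plus. reflexivity.
Qed.

Lemma rsum_le {A} (f g : A -> R) l :
  (forall x, In x l -> f x <= g x) -> rsum f l <= rsum g l.
Proof.
  induction l as [|a l IH]; intros H; simpl; [lra|].
  pose proof (H a (or_introl eq_refl)).
  assert (rsum f l <= rsum g l) by (apply IH; intros; apply H; simpl; auto).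
  lra.
Qed.

Lemma rsum_const {A} c (l : list A) : rsum (fun _ => c) l = INR (length l) * c.
Proof.
  induction l as [|a l IH]; [simpl; lra|].
  change (c + rsum (fun _ => c) l = INR (S (length l)) * c). rewrite S_INR, IH. lra.
Qed.

Lemma rsum_map {A} (s : A -> A) (f : A -> R) l : rsum f (map s l) = rsum (fun x => f (s x)) l.
Proof. induction l; simpl; lra. Qed.

Lemma rsum_Permutation {A} (f : A -> R) l l' : Permutation l l' -> rsum f l = rsum f l'.
Proof. induction 1; simpl; lra. Qed.

Lemma rsum_nonneg {A} (f : A -> R) l : (forall x, 0 <= f x) -> 0 <= rsum f l.
Proof. intros H. induction l as [|a l IH]; simpl; [lra|]. specialize (H a). lra. Qed.

Lemma rsum_ge1 {A} (f : A -> R) l x : (forall z, 0 <= f z) -> In x l -> f x <= rsum f l.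
Proof.
  intros H. induction l as [|a l IH]; simpl; [tauto|].
  pose proof (rsum_nonneg f l H). pose proof (H a).
  intros [<-|Hx]; [|specialize (IH Hx)]; lra.
Qed.

Lemma rsum_ge2 {A} (f : A -> R) l x y :
  (forall z, 0 <= f z) -> NoDup l -> In x l -> In y l -> x <> y -> f x + f y <= rsum f l.
Proof.
  intros H Hnd. induction Hnd as [|a l Ha Hnd IH]; simpl; [tauto|].
  pose proof (H a).
  intros [<-|Hx] [<-|Hy] Hxy; try congruence.
  - pose proof (rsum_ge1 f l y H Hy). lra.
  - pose proof (rsum_ge1 f l x H Hx). lra.
  - specialize (IH Hx Hy Hxy). lra.
Qed.

Lemma rsum_unique_support {A} (p : A -> bool) (F : A -> R) l c :
  NoDup l -> In c l -> (forall w, In w l -> p w = true <-> w = c) ->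
  rsum (fun w => if p w then F w else 0) l = F c.
Proof.
  intros Hnd. induction Hnd as [|a l Ha Hnd IH]; simpl; [tauto|].
  intros Hc Hp. destruct (p a) eqn:Epa.
  - assert (a = c) as <- by (apply Hp; simpl; auto).
    rewrite (rsum_ext _ (fun _ => 0)); [rewrite rsum_const; lra|].
    intros w Hw. destruct (p w) eqn:Epw; [|reflexivity].
    apply Hp in Epw; [congruence|right; exact Hw].
  - destruct Hc as [<-|Hc].
    + assert (p a = true) by (apply Hp; simpl; auto). congruence.
    + rewrite IH; [lra|exact Hc|]. intros w Hw. apply Hp. right; exact Hw.
Qed.

Lemma INR_fold_add {A} (g : A -> nat) l :
  INR (fold_right Nat.add 0%nat (map g l)) = rsum (fun x => INR (g x)) l.
Proof. induction l as [|a l IH]; simpl; [reflexivity|]. rewrite plus_INR, IH. reflexivity. Qed.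

Lemma ipow_re_S m : ipow_re (S m) = - ipow_im m.
Proof.
  unfold ipow_re, ipow_im.
  rewrite <- Nat.add_1_r, <- Nat.Div0.add_mod_idemp_l.
  pose proof (Nat.mod_upper_bound m 4 ltac:(lia)).
  destruct (m mod 4)%nat as [|[|[|[|]]]]; simpl; lra || lia.
Qed.

Lemma ipow_im_S m : ipow_im (S m) = ipow_re m.
Proof.
  unfold ipow_re, ipow_im.
  rewrite <- Nat.add_1_r, <- Nat.Div0.add_mod_idemp_l.
  pose proof (Nat.mod_upper_bound m 4 ltac:(lia)).
  destruct (m mod 4)%nat as [|[|[|[|]]]]; simpl; lra || lia.
Qed.

Lemma Rabs_ipow_re_le_1 m : Rabs (ipow_re m) <= 1.
Proof.
  unfold ipow_re. destruct (m mod 4)%nat as [|[|[|]]]; unfold Rabs; destruct Rcase_abs; lra.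
Qed.

Lemma Rabs_ipow_im_le_1 m : Rabs (ipow_im m) <= 1.
Proof.
  unfold ipow_im. destruct (m mod 4)%nat as [|[|[|[|]]]]; unfold Rabs; destruct Rcase_abs; lra.
Qed.

Lemma CV_radius_exp_bounded (a : nat -> R) (L : R) :
  0 <= L -> (forall m, Rabs (a m) <= L ^ m / INR (fact m)) ->
  forall x, Rbar_lt (Rabs x) (CV_radius a).
Proof.
  intros HL Ha x.
  set (y := Rabs x + 1).
  assert (Hy : 0 <= y) by (pose proof (Rabs_pos x); unfold y; lra).
  assert (Hdisk : ex_series (fun m => Rabs (a m * y ^ m))).
  { apply (ex_series_le (K := R_AbsRing) (V := R_CompleteNormedModule) _
             (fun m => / INR (fact m) * (L * y) ^ m)).
    - intros m. change (Rabs (Rabs (a m * y ^ m)) <= / INR (fact m) * (L * y) ^ m).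
      rewrite Rabs_Rabsolu, Rabs_mult, (Rabs_right (y ^ m))
        by (apply Rle_ge, pow_le, Hy).
      rewrite Rpow_mult_distr. specialize (Ha m). unfold Rdiv in Ha.
      pose proof (pow_le y m Hy). nra.
    - exists (exp (L * y)). pose proof (is_exp_Reals (L * y)) as He.
      apply (is_series_ext _ _ _ (fun m => Rmult_comm _ _)).
      apply (is_series_ext (fun m => scal (pow_n (L * y) m) (/ INR (fact m)))).
      { intros m. rewrite pow_n_pow. reflexivity. }
      exact He. }
  destruct (Rbar_lt_le_dec (Rabs x) (CV_radius a)) as [Hlt|Hle]; [exact Hlt|].
  exfalso. apply (CV_disk_outside a y).
  - pose proof (Rabs_pos x). unfold y. rewrite Rabs_right by lra.
    destruct (CV_radius a) as [r| |]; simpl in *; lra.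
  - apply ex_series_lim_0. apply ex_series_Rabs. exact Hdisk.
Qed.

Lemma is_pseries_zero x : is_pseries (fun _ => 0) x 0.
Proof.
  apply (is_series_ext (fun _ => 0)); [intros m; symmetry; apply Rmult_0_r|].
  apply is_series_Reals. intros eps Heps. exists O. intros m _.
  rewrite sum_eq_R0 by auto. unfold R_dist. rewrite Rminus_0_r, Rabs_R0. exact Heps.
Qed.

Lemma is_pseries_rsum {A} (g : A -> nat -> R) (G : A -> R) l x :
  (forall w, In w l -> is_pseries (g w) x (G w)) ->
  is_pseries (fun m => rsum (fun w => g w m) l) x (rsum G l).
Proof.
  induction l as [|a l IH]; intros H; [apply is_pseries_zero|].
  apply (is_pseries_plus (K := R_AbsRing) (V := R_NormedModule) (g a)).
  - apply H; left; reflexivity.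
  - apply IH. intros; apply H; right; assumption.
Qed.

Lemma is_derive_rsum {A} (F : A -> R -> R) (dF : A -> R) l t :
  (forall w, In w l -> is_derive (F w) t (dF w)) ->
  is_derive (fun s => rsum (fun w => F w s) l) t (rsum dF l).
Proof.
  induction l as [|a l IH]; intros H.
  - apply (is_derive_const (K := R_AbsRing) (V := R_NormedModule) 0 t).
  - apply (is_derive_plus (K := R_AbsRing) (V := R_NormedModule) (F a)).
    + apply H; left; reflexivity.
    + apply IH. intros; apply H; right; assumption.
Qed.

Lemma harmonic_eq_sin (f g : R -> R) t :
  (forall s, is_derive f s (g s)) -> (forall s, is_derive g s (- f s)) ->
  f 0 = 0 -> g 0 = 1 -> 0 < t -> f t = sin t.
Proof.
  intros Hf Hg Hf0 Hg0 Ht.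
  set (h := fun s => (f s - sin s) ^ 2 + (g s - cos s) ^ 2).
  assert (Hh : forall s, is_derive h s 0).
  { intros s.
    replace 0 with (INR 2 * (g s - cos s) * (f s - sin s) ^ 1
                    + INR 2 * (- f s - - sin s) * (g s - cos s) ^ 1) by (simpl; ring).
    apply (is_derive_plus (K := R_AbsRing) (V := R_NormedModule)
             (fun s => (f s - sin s) ^ 2) (fun s => (g s - cos s) ^ 2)).
    - apply (is_derive_pow (fun s => f s - sin s)).
      apply (is_derive_minus (K := R_AbsRing) (V := R_NormedModule) f sin);
        auto using is_derive_sin.
    - apply (is_derive_pow (fun s => g s - cos s)).
      apply (is_derive_minus (K := R_AbsRing) (V := R_NormedModule) g cos);
        auto using is_derive_cos. }
  assert (Hht : h t = 0).
  { rewrite <- (eq_is_derive h 0 t (fun s _ => Hh s) Ht).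
    unfold h. rewrite Hf0, Hg0, sin_0, cos_0. ring. }
  unfold h in Hht.
  assert (E : (f t - sin t) ^ 2 = 0)
    by (pose proof (pow2_ge_0 (f t - sin t)); pose proof (pow2_ge_0 (g t - cos t)); lra).
  destruct (Req_dec (f t) (sin t)) as [|Hne]; [assumption|].
  exfalso. apply (pow_nonzero (f t - sin t) 2); [lra|exact E].
Qed.

Section WalkSeries.

Context {T : Type} (eqdec : forall x y : T, {x = y} + {x <> y})
  (V : list T) (adj : T -> T -> bool).

Definition adj_mul (F : T -> R) (u : T) : R := rsum (fun w => if adj u w then F w else 0) V.

Definition walksR (m : nat) (u v : T) : R := INR (walks eqdec V adj m u v).

Lemma walksR_S m u v : walksR (S m) u v = adj_mul (fun w => walksR m w v) u.
Proof.
  unfold walksR, adj_mul. simpl walks. rewrite INR_fold_add.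
  apply rsum_ext. intros w _. destruct (adj u w); reflexivity.
Qed.

Lemma walksR_bounds m u v : 0 <= walksR m u v <= INR (length V) ^ m.
Proof.
  revert u. induction m as [|m IH]; intros u.
  - unfold walksR. simpl. destruct (eqdec u v); simpl; lra.
  - split; [apply pos_INR|]. rewrite walksR_S. unfold adj_mul.
    rewrite <- tech_pow_Rmult, <- rsum_const.
    apply rsum_le. intros w _. destruct (adj u w); [apply IH|apply pow_le, pos_INR].
Qed.

(* [entry ipow_re u v t] and [entry ipow_im u v t] are the real and imaginary parts of
   [exp (itA)]_{uv} = sum_m (it)^m (A^m)_{uv} / m!. *)
Definition coef (c : nat -> R) (u v : T) (m : nat) : R := c m / INR (fact m) * walksR m u v.

Definition entry (c : nat -> R) (u v : T) (t : R) : R := PSeries (coef c u v) t.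

Section BoundedPhase.

Variable c : nat -> R.
Hypothesis c_bounded : forall m, Rabs (c m) <= 1.

Lemma CV_radius_coef u v x : Rbar_lt (Rabs x) (CV_radius (coef c u v)).
Proof.
  apply (CV_radius_exp_bounded _ (INR (length V))); [apply pos_INR|]. intros m.
  pose proof (walksR_bounds m u v). pose proof (c_bounded m). pose proof (Rabs_pos (c m)).
  pose proof (Rinv_0_lt_compat _ (INR_fact_lt_0 m)).
  unfold coef, Rdiv. rewrite !Rabs_mult, (Rabs_right (/ _)), (Rabs_right (walksR _ _ _)) by lra.
  assert (Rabs (c m) * walksR m u v <= INR (length V) ^ m) by nra. nra.
Qed.

Lemma is_pseries_entry u v t : is_pseries (coef c u v) t (entry c u v t).
Proof. apply PSeries_correct, CV_radius_inside, CV_radius_coef. Qed.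

Lemma infinite_sum_entry u v t :
  infinite_sum (fun m => c m * t ^ m / INR (fact m) * INR (walks eqdec V adj m u v))
    (entry c u v t).
Proof.
  apply is_series_Reals. eapply is_series_ext; [|apply is_pseries_entry].
  intros m. change (pow_n t m * coef c u v m = c m * t ^ m / INR (fact m) * walksR m u v).
  rewrite pow_n_pow. unfold coef, Rdiv. ring.
Qed.

End BoundedPhase.

Lemma adj_mul_scal k F u : adj_mul (fun w => k * F w) u = k * adj_mul F u.
Proof.
  unfold adj_mul. rewrite <- rsum_scal. apply rsum_ext. intros w _. destruct (adj u w); ring.
Qed.

Lemma is_pseries_adj_mul (g : T -> nat -> R) (G : T -> R) u x :
  (forall w, is_pseries (g w) x (G w)) ->
  is_pseries (fun m => adj_mul (fun w => g w m) u) x (adj_mul G u).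
Proof.
  intros H. apply (is_pseries_rsum (fun w m => if adj u w then g w m else 0)).
  intros w _. destruct (adj u w); [apply H|apply is_pseries_zero].
Qed.

Section Derivative.

Variables (c d : nat -> R) (sigma : R).
Hypotheses (c_bounded : forall m, Rabs (c m) <= 1) (d_bounded : forall m, Rabs (d m) <= 1).
Hypothesis c_S : forall m, c (S m) = sigma * d m.

Lemma PS_derive_coef u v m :
  PS_derive (coef c u v) m = sigma * adj_mul (fun w => coef d w v m) u.
Proof.
  unfold PS_derive, coef. rewrite c_S, walksR_S, <- !adj_mul_scal.
  unfold adj_mul. apply rsum_ext. intros w _. destruct (adj u w); [|ring].
  pose proof (INR_fact_lt_0 m). pose proof (lt_0_INR (S m) (Nat.lt_0_succ m)).
  change (fact (S m)) with (S m * fact m)%nat. rewrite mult_INR. field. lra.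
Qed.

Lemma is_derive_entry u v t :
  is_derive (entry c u v) t (sigma * adj_mul (fun w => entry d w v t) u).
Proof.
  replace (sigma * adj_mul _ u) with (PSeries (PS_derive (coef c u v)) t).
  - apply is_derive_PSeries, CV_radius_coef, c_bounded.
  - apply is_pseries_unique.
    apply (is_pseries_ext (fun m => sigma * adj_mul (fun w => coef d w v m) u));
      [intros m; symmetry; apply PS_derive_coef|].
    apply (is_pseries_scal (K := R_AbsRing) (V := R_NormedModule) sigma _ t);
      [apply Rmult_comm|].
    apply is_pseries_adj_mul. intros w. apply is_pseries_entry, d_bounded.
Qed.

End Derivative.

Lemma is_derive_entry_re u v t :
  is_derive (entry ipow_re u v) t (- adj_mul (fun w => entry ipow_im w v t) u).
Proof.
  replace (- adj_mul _ u) with (-1 * adj_mul (fun w => entry ipow_im w v t) u) by ring.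
  apply is_derive_entry; auto using Rabs_ipow_re_le_1, Rabs_ipow_im_le_1.
  intros m. rewrite ipow_re_S. ring.
Qed.

Lemma is_derive_entry_im u v t :
  is_derive (entry ipow_im u v) t (adj_mul (fun w => entry ipow_re w v t) u).
Proof.
  rewrite <- (Rmult_1_l (adj_mul _ u)).
  apply is_derive_entry; auto using Rabs_ipow_re_le_1, Rabs_ipow_im_le_1.
  intros m. rewrite ipow_im_S. ring.
Qed.

Definition entry_norm2 (u v : T) (t : R) : R :=
  entry ipow_re u v t ^ 2 + entry ipow_im u v t ^ 2.

Lemma entry_norm2_nonneg u v t : 0 <= entry_norm2 u v t.
Proof.
  unfold entry_norm2.
  pose proof (pow2_ge_0 (entry ipow_re u v t)). pose proof (pow2_ge_0 (entry ipow_im u v t)). lra.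
Qed.

Lemma entry_at_0 c u v : entry c u v 0 = if eqdec u v then c 0%nat else 0.
Proof.
  unfold entry, coef, walksR. rewrite PSeries_0. simpl. destruct (eqdec u v); simpl; field.
Qed.

Lemma transition_entry_iff t u v re im :
  transition_entry eqdec V adj t u v re im <->
  re = entry ipow_re u v t /\ im = entry ipow_im u v t.
Proof.
  pose proof (infinite_sum_entry ipow_re Rabs_ipow_re_le_1 u v t).
  pose proof (infinite_sum_entry ipow_im Rabs_ipow_im_le_1 u v t).
  unfold transition_entry. split.
  - intros [Hre Him]. split; eapply uniqueness_sum; eassumption.
  - intros [-> ->]. split; assumption.
Qed.

Lemma PST_at_iff u v tau :
  PST_at eqdec V adj u v tau <->
  In u V /\ In v V /\ u <> v /\ 0 < tau /\ entry_norm2 u v tau = 1.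
Proof.
  unfold PST_at, entry_norm2. split.
  - intros (Hu & Hv & Huv & Htau & re & im & Hent & Hone).
    apply transition_entry_iff in Hent as [-> ->]. tauto.
  - intros (Hu & Hv & Huv & Htau & Hone). do 4 (split; [assumption|]).
    exists (entry ipow_re u v tau), (entry ipow_im u v tau).
    split; [apply transition_entry_iff; split; reflexivity|exact Hone].
Qed.

Section Symmetric.

Hypothesis adj_sym : forall x y, adj x y = adj y x.
Hypothesis V_NoDup : NoDup V.

Lemma adj_mul_selfadjoint X Y :
  rsum (fun u => X u * adj_mul Y u) V = rsum (fun u => Y u * adj_mul X u) V.
Proof.
  unfold adj_mul.
  transitivity (rsum (fun u => rsum (fun w => if adj u w then X u * Y w else 0) V) V).
  { apply rsum_ext. intros u _. rewrite <- rsum_scal.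
    apply rsum_ext. intros w _. destruct (adj u w); ring. }
  rewrite rsum_swap. apply rsum_ext. intros w _. rewrite <- rsum_scal.
  apply rsum_ext. intros u _. rewrite adj_sym. destruct (adj w u); ring.
Qed.

Lemma is_derive_column_norm v t :
  is_derive (fun s => rsum (fun u => entry_norm2 u v s) V) t 0.
Proof.
  set (X := fun u => entry ipow_re u v t). set (Y := fun u => entry ipow_im u v t).
  replace 0 with (rsum (fun u => INR 2 * (- adj_mul Y u) * X u ^ 1
                                 + INR 2 * adj_mul X u * Y u ^ 1) V).
  - apply is_derive_rsum. intros u _.
    apply (is_derive_plus (K := R_AbsRing) (V := R_NormedModule)
             (fun s => entry ipow_re u v s ^ 2) (fun s => entry ipow_im u v s ^ 2));
      apply is_derive_pow; [apply is_derive_entry_re|apply is_derive_entry_im].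
  - rewrite (rsum_ext _ (fun u => -2 * (X u * adj_mul Y u) + 2 * (Y u * adj_mul X u)))
      by (intros; simpl; ring).
    rewrite rsum_plus, !rsum_scal, adj_mul_selfadjoint. ring.
Qed.

Lemma column_norm v t : In v V -> 0 <= t -> rsum (fun u => entry_norm2 u v t) V = 1.
Proof.
  intros Hv Ht.
  assert (H0 : rsum (fun u => entry_norm2 u v 0) V = 1).
  { rewrite <- (rsum_unique_support (fun u => if eqdec u v then true else false) (fun _ => 1) V v)
      by (auto; intros w _; destruct (eqdec w v); intuition congruence).
    apply rsum_ext. intros u _. unfold entry_norm2. rewrite !entry_at_0.
    unfold ipow_re, ipow_im. simpl. destruct (eqdec u v); simpl; ring. }
  destruct (Rle_lt_or_eq_dec 0 t Ht) as [Hlt|<-]; [|exact H0].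
  rewrite <- H0. symmetry.
  apply (eq_is_derive (fun s => rsum (fun u => entry_norm2 u v s) V)); [|exact Hlt].
  intros s _. apply is_derive_column_norm.
Qed.

Lemma entry_norm2_le_1 u v t : In u V -> In v V -> 0 <= t -> entry_norm2 u v t <= 1.
Proof.
  intros Hu Hv Ht. rewrite <- (column_norm v t Hv Ht).
  apply (rsum_ge1 (fun w => entry_norm2 w v t)); [intros; apply entry_norm2_nonneg|exact Hu].
Qed.

Section Automorphism.

Variable s : T -> T.
Hypotheses (s_in : forall x, In x V -> In (s x) V)
  (s_inj : forall x y, In x V -> In y V -> s x = s y -> x = y)
  (s_adj : forall x y, In x V -> In y V -> adj (s x) (s y) = adj x y).

Lemma walksR_automorphism m x y : In x V -> In y V -> walksR m (s x) (s y) = walksR m x y.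
Proof.
  assert (HV : Permutation (map s V) V).
  { apply Permutation_map_same_l.
    - apply FinFun.Injective_map_NoDup_in; assumption.
    - intros z Hz. apply in_map_iff in Hz as [w [<- Hw]]. auto. }
  revert x. induction m as [|m IH]; intros x Hx Hy.
  - unfold walksR. simpl. destruct (eqdec (s x) (s y)), (eqdec x y); subst; auto.
    + exfalso. auto.
    + congruence.
  - rewrite !walksR_S. unfold adj_mul.
    rewrite <- (rsum_Permutation _ _ _ HV), rsum_map.
    apply rsum_ext. intros w Hw. rewrite s_adj, IH by assumption. reflexivity.
Qed.

Lemma entry_automorphism c u v t :
  In u V -> In v V -> s v = v -> entry c (s u) v t = entry c u v t.
Proof.
  intros Hu Hv Hsv. unfold entry. apply PSeries_ext. intros m. unfold coef.
  rewrite <- Hsv at 1. rewrite walksR_automorphism by assumption. reflexivity.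
Qed.

Lemma entry_norm2_le_half u v t :
  In u V -> In v V -> 0 <= t -> s v = v -> s u <> u -> entry_norm2 u v t <= 1 / 2.
Proof.
  intros Hu Hv Ht Hsv Hsu.
  assert (Hsu_norm : entry_norm2 (s u) v t = entry_norm2 u v t)
    by (unfold entry_norm2; rewrite !entry_automorphism by assumption; reflexivity).
  pose proof (rsum_ge2 (fun w => entry_norm2 w v t) V u (s u)
                (fun w => entry_norm2_nonneg w v t) V_NoDup Hu (s_in u Hu) (not_eq_sym Hsu))
    as Hpair.
  rewrite column_norm in Hpair by assumption. lra.
Qed.

Lemma not_PST_at_automorphism u v tau : s v = v -> s u <> u -> ~ PST_at eqdec V adj u v tau.
Proof.
  intros Hsv Hsu HP. apply PST_at_iff in HP as (Hu & Hv & _ & Htau & Hone).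
  pose proof (entry_norm2_le_half u v tau Hu Hv (Rlt_le _ _ Htau) Hsv Hsu). lra.
Qed.

End Automorphism.

(* If [u] and [c] are each other's only neighbours, [Im exp(itA)_{uc}] and [Re exp(itA)_{cc}]
   solve [f' = g, g' = -f], hence are [sin] and [cos]. *)
Lemma PST_at_matched_pair u c :
  In u V -> In c V -> u <> c ->
  (forall w, In w V -> adj u w = true <-> w = c) ->
  (forall w, In w V -> adj c w = true <-> w = u) ->
  PST_at eqdec V adj u c (PI / 2).
Proof.
  intros Hu Hc Huc Hnu Hnc.
  assert (Hmu : forall F, adj_mul F u = F c) by (intros; apply rsum_unique_support; assumption).
  assert (Hmc : forall F, adj_mul F c = F u) by (intros; apply rsum_unique_support; assumption).
  assert (Hsin : entry ipow_im u c (PI / 2) = 1).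
  { rewrite <- sin_PI2.
    apply (harmonic_eq_sin (entry ipow_im u c) (entry ipow_re c c)).
    - intros s. rewrite <- (Hmu (fun w => entry ipow_re w c s)). apply is_derive_entry_im.
    - intros s. rewrite <- (Hmc (fun w => entry ipow_im w c s)). apply is_derive_entry_re.
    - rewrite entry_at_0. destruct (eqdec u c); [congruence|reflexivity].
    - rewrite entry_at_0. destruct (eqdec c c); [reflexivity|congruence].
    - pose proof PI_RGT_0. lra. }
  pose proof PI_RGT_0.
  pose proof (entry_norm2_le_1 u c (PI / 2) Hu Hc ltac:(lra)) as Hle.
  apply PST_at_iff. do 4 (split; [assumption || lra|]).
  unfold entry_norm2 in *. rewrite Hsin in *.
  pose proof (pow2_ge_0 (entry ipow_re u c (PI / 2))). lra.
Qed.

End Symmetric.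

End WalkSeries.

Close Scope R_scope.

Lemma In_all_bool_lists n l : In l (all_bool_lists n) <-> length l = n.
Proof.
  revert l. induction n as [|n IH]; intros l; simpl.
  - split; [intros [<-|[]]; reflexivity|]. destruct l; [auto|discriminate].
  - rewrite in_app_iff, !in_map_iff. split.
    + intros [[l' [<- H]]|[l' [<- H]]]; simpl; f_equal; apply IH; exact H.
    + destruct l as [|b l]; [discriminate|]. intros [= H].
      destruct b; [left|right]; exists l; split; auto; apply IH; exact H.
Qed.

Lemma NoDup_all_bool_lists n : NoDup (all_bool_lists n).
Proof.
  induction n as [|n IH]; simpl; [repeat constructor; auto|].
  apply NoDup_app;
    try (apply FinFun.Injective_map_NoDup; [intros a b [= ->]; reflexivity|exact IH]).
  intros a H1 H2. apply in_map_iff in H1 as [x [<- _]], H2 as [y [H _]]. discriminate.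
Qed.

Lemma In_kneser_vertices n k l :
  In l (kneser_vertices n k) <-> length l = n /\ card_true l = k.
Proof. unfold kneser_vertices. rewrite filter_In, In_all_bool_lists, Nat.eqb_eq. tauto. Qed.

Lemma NoDup_kneser_vertices n k : NoDup (kneser_vertices n k).
Proof. apply NoDup_filter, NoDup_all_bool_lists. Qed.

Lemma disjointb_comm x y : disjointb x y = disjointb y x.
Proof.
  revert y. induction x as [|a x IH]; intros [|b y]; auto.
  unfold disjointb in *. simpl. rewrite IH, (andb_comm a b). reflexivity.
Qed.

Lemma disjointb_nth x y : length x = length y ->
  disjointb x y = true <-> forall p, p < length x -> nth p x false && nth p y false = false.
Proof.
  revert y. induction x as [|a x IH]; intros [|b y] Hl; try discriminate.
  - split; [intros _ p Hp; simpl in Hp; lia|reflexivity].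
  - injection Hl as Hl. unfold disjointb in *. simpl. rewrite andb_true_iff, IH by exact Hl.
    split.
    + intros [Hab Hxy] [|p] Hp; simpl; [destruct (a && b); auto|apply Hxy; simpl in Hp; lia].
    + intros H. split.
      * specialize (H 0 ltac:(simpl; lia)). simpl in H. rewrite H. reflexivity.
      * intros p Hp. apply (H (S p)). simpl. lia.
Qed.

Lemma card_true_Permutation l l' : Permutation l l' -> card_true l = card_true l'.
Proof.
  unfold card_true. induction 1 as [|[|] l l' _ IH|[|] [|] l|l l' l'' _ IH1 _ IH2]; simpl; lia.
Qed.

Lemma card_true_map_negb l : card_true (map negb l) + card_true l = length l.
Proof. induction l as [|[|] l IH]; unfold card_true in *; simpl; lia. Qed.

Lemma card_true_app l l' : card_true (l ++ l') = card_true l + card_true l'.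
Proof. unfold card_true. rewrite filter_app, length_app. reflexivity. Qed.

Lemma card_true_repeat b m : card_true (repeat b m) = if b then m else 0.
Proof. induction m as [|m IH]; unfold card_true in *; destruct b; simpl; auto. Qed.

Definition transpose (i j p : nat) : nat := if p =? i then j else if p =? j then i else p.

Lemma transpose_involutive i j p : transpose i j (transpose i j p) = p.
Proof.
  unfold transpose.
  destruct (Nat.eqb_spec p i), (Nat.eqb_spec p j);
    repeat match goal with |- context [?a =? ?b] => destruct (Nat.eqb_spec a b) end; lia.
Qed.

Lemma transpose_lt i j p n : i < n -> j < n -> p < n -> transpose i j p < n.
Proof. unfold transpose. destruct (p =? i), (p =? j); lia. Qed.

Lemma nth_map_lt {A B} (f : A -> B) l d d' p : p < length l -> nth p (map f l) d' = f (nth p l d).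
Proof.
  intros Hp. rewrite nth_indep with (d' := f d) by (rewrite length_map; exact Hp).
  apply map_nth.
Qed.

Lemma nth_map_seq {A} (f : nat -> A) n p d : p < n -> nth p (map f (seq 0 n)) d = f p.
Proof.
  intros Hp. rewrite (nth_map_lt _ _ 0) by (rewrite length_seq; exact Hp).
  rewrite seq_nth by exact Hp. reflexivity.
Qed.

Definition swap_coords (i j : nat) (l : list bool) : list bool :=
  map (fun p => nth (transpose i j p) l false) (seq 0 (length l)).

Lemma length_swap_coords i j l : length (swap_coords i j l) = length l.
Proof. unfold swap_coords. rewrite length_map, length_seq. reflexivity. Qed.

Lemma nth_swap_coords i j l p :
  p < length l -> nth p (swap_coords i j l) false = nth (transpose i j p) l false.
Proof.
  intros Hp. unfold swap_coords. rewrite nth_map_seq by exact Hp. reflexivity.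
Qed.

Section SwapCoords.

Variables (i j : nat) (l : list bool).
Hypotheses (Hi : i < length l) (Hj : j < length l).

Lemma swap_coords_involutive : swap_coords i j (swap_coords i j l) = l.
Proof.
  apply (nth_ext _ _ false false); [rewrite !length_swap_coords; reflexivity|].
  intros p Hp. rewrite !length_swap_coords in Hp.
  rewrite nth_swap_coords, nth_swap_coords, transpose_involutive;
    rewrite ?length_swap_coords; auto using transpose_lt.
Qed.

Lemma Permutation_swap_coords : Permutation (swap_coords i j l) l.
Proof.
  assert (Hl : map (fun p => nth p l false) (seq 0 (length l)) = l).
  { apply (nth_ext _ _ false false); [rewrite length_map, length_seq; reflexivity|].
    intros p Hp. rewrite length_map, length_seq in Hp.
    rewrite nth_map_seq by exact Hp. reflexivity. }
  rewrite <- Hl at 2. unfold swap_coords.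
  rewrite <- map_map with (f := transpose i j) (g := fun p => nth p l false).
  apply Permutation_map, Permutation_map_same_l.
  - apply FinFun.Injective_map_NoDup; [|apply seq_NoDup].
    intros a b H. rewrite <- (transpose_involutive i j a), H. apply transpose_involutive.
  - intros z Hz. apply in_map_iff in Hz as [w [<- Hw]]. apply in_seq in Hw. apply in_seq.
    pose proof (transpose_lt i j w (length l) Hi Hj ltac:(lia)). lia.
Qed.

Lemma swap_coords_id : nth i l false = nth j l false -> swap_coords i j l = l.
Proof.
  intros H. apply (nth_ext _ _ false false); [apply length_swap_coords|].
  intros p Hp. rewrite length_swap_coords in Hp. rewrite nth_swap_coords by exact Hp.
  unfold transpose. destruct (Nat.eqb_spec p i), (Nat.eqb_spec p j); subst; auto.
Qed.

Lemma swap_coords_neq : nth i l false <> nth j l false -> swap_coords i j l <> l.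
Proof.
  intros H E. apply H. rewrite <- E at 1. rewrite nth_swap_coords by exact Hi.
  unfold transpose. rewrite Nat.eqb_refl. reflexivity.
Qed.

End SwapCoords.

Lemma disjointb_swap_coords i j x y :
  length x = length y -> i < length x -> j < length x ->
  disjointb (swap_coords i j x) (swap_coords i j y) = disjointb x y.
Proof.
  intros Hl Hi Hj. apply eq_true_iff_eq.
  rewrite !disjointb_nth, length_swap_coords by (rewrite ?length_swap_coords; assumption).
  split; intros H p Hp.
  - specialize (H (transpose i j p) (transpose_lt i j p _ Hi Hj Hp)).
    rewrite !nth_swap_coords, transpose_involutive in H
      by (rewrite <- ?Hl; auto using transpose_lt).
    exact H.
  - rewrite !nth_swap_coords by (rewrite <- ?Hl; exact Hp). auto using transpose_lt.
Qed.

Lemma exists_nth_eq (b : bool) l :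
  card_true l <> (if b then 0 else length l) -> exists p, p < length l /\ nth p l false = b.
Proof.
  induction l as [|a l IH]; unfold card_true in *; simpl; [destruct b; simpl; lia|].
  intros H. destruct (Bool.bool_dec a b) as [<-|Hab].
  - exists 0. split; [lia|reflexivity].
  - destruct IH as [p [Hp Hnth]]; [destruct a, b; simpl in *; congruence || lia|].
    exists (S p). split; [lia|exact Hnth].
Qed.

Lemma coords_determined (u v : list bool) p q :
  length u = length v -> p < length v -> q < length v ->
  nth p v false = true -> nth q v false = false ->
  (forall i j, i < length v -> j < length v -> nth i v false = nth j v false ->
               nth i u false = nth j u false) ->
  u = map (fun b : bool => if b then nth p u false else nth q u false) v.
Proof.
  intros Hl Hp Hq Ep Eq H. apply (nth_ext _ _ false false); [rewrite length_map; exact Hl|].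
  intros i Hi. rewrite (nth_map_lt _ _ false) by lia.
  destruct (nth i v false) eqn:E; apply H; congruence || lia.
Qed.

Lemma kneser_separating_coords n k u v :
  1 <= k -> 2 * k < n -> length u = n -> length v = n ->
  card_true u = k -> card_true v = k -> u <> v ->
  exists i j, i < n /\ j < n /\ nth i v false = nth j v false /\ nth i u false <> nth j u false.
Proof.
  intros Hk Hn Hu Hv Hcu Hcv Huv.
  (* Otherwise [u] is a coordinatewise function of [v]: constant, [v] or its complement. *)
  apply NNPP. intros Hno.
  destruct (exists_nth_eq true v) as [p [Hp Ep]]; [lia|].
  destruct (exists_nth_eq false v) as [q [Hq Eq]]; [lia|].
  assert (Hdet : u = map (fun b : bool => if b then nth p u false else nth q u false) v).
  { apply coords_determined; try lia; auto.
    intros i j Hi Hj E. apply NNPP. intros Hne. apply Hno. exists i, j. repeat split; auto; lia. }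
  pose proof (card_true_map_negb v).
  destruct (nth p u false), (nth q u false).
  - rewrite (map_ext _ (fun _ => true)) in Hdet by (intros [|]; reflexivity).
    rewrite Hdet, map_const, card_true_repeat in Hcu. lia.
  - rewrite (map_ext _ (fun b => b)), map_id in Hdet by (intros [|]; reflexivity). contradiction.
  - rewrite (map_ext _ negb) in Hdet by (intros [|]; reflexivity). subst u. lia.
  - rewrite (map_ext _ (fun _ => false)) in Hdet by (intros [|]; reflexivity).
    rewrite Hdet, map_const, card_true_repeat in Hcu. lia.
Qed.

Lemma disjointb_map_negb x : disjointb x (map negb x) = true.
Proof. induction x as [|[|] x IH]; auto. Qed.

Lemma disjointb_card x w :
  length x = length w -> disjointb x w = true -> card_true x + card_true w <= length x.
Proof.
  revert w. induction x as [|a x IH]; intros [|b w] Hl Hd; try discriminate;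
    [unfold card_true; simpl; lia|].
  injection Hl as Hl. unfold disjointb in Hd. simpl in Hd. apply andb_true_iff in Hd as [Hab Hd].
  specialize (IH w Hl Hd). unfold card_true in *. destruct a, b; simpl in *; lia || discriminate.
Qed.

Lemma disjointb_card_eq x w :
  length x = length w -> disjointb x w = true -> card_true x + card_true w = length x ->
  w = map negb x.
Proof.
  revert w. induction x as [|a x IH]; intros [|b w] Hl Hd Hc; try discriminate; [reflexivity|].
  injection Hl as Hl. unfold disjointb in Hd. simpl in Hd. apply andb_true_iff in Hd as [Hab Hd].
  pose proof (disjointb_card x w Hl Hd). unfold card_true in *.
  destruct a, b; simpl in *; try discriminate; try lia; f_equal; apply IH; auto; lia.
Qed.

Lemma kneser_2k_neighbour k x w :
  In x (kneser_vertices (2 * k) k) -> In w (kneser_vertices (2 * k) k) ->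
  disjointb x w = true <-> w = map negb x.
Proof.
  rewrite !In_kneser_vertices. intros [Hx Cx] [Hw Cw]. split.
  - intros Hd. apply disjointb_card_eq; auto; lia.
  - intros ->. apply disjointb_map_negb.
Qed.

Lemma kneser_no_PST n k u v tau : 1 <= k -> 2 * k < n ->
  ~ PST_at bl_eqdec (kneser_vertices n k) disjointb u v tau.
Proof.
  intros Hk Hn HP. pose proof HP as (Hu & Hv & Huv & _).
  apply In_kneser_vertices in Hu as [Lu Cu], Hv as [Lv Cv].
  destruct (kneser_separating_coords n k u v Hk Hn Lu Lv Cu Cv Huv)
    as (i & j & Hi & Hj & Ev & Eu).
  revert HP. apply (not_PST_at_automorphism bl_eqdec _ _ disjointb_comm
                      (NoDup_kneser_vertices n k) (swap_coords i j)).
  - intros x Hx. apply In_kneser_vertices in Hx as [Lx Cx]. apply In_kneser_vertices.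
    rewrite length_swap_coords, (card_true_Permutation _ x) by (apply Permutation_swap_coords; lia).
    auto.
  - intros x y Hx Hy E. apply In_kneser_vertices in Hx as [Lx _], Hy as [Ly _].
    rewrite <- (swap_coords_involutive i j x), <- (swap_coords_involutive i j y), E by lia.
    reflexivity.
  - intros x y Hx Hy. apply In_kneser_vertices in Hx as [Lx _], Hy as [Ly _].
    apply disjointb_swap_coords; lia.
  - apply swap_coords_id; lia || assumption.
  - apply swap_coords_neq; lia || assumption.
Qed.

Lemma kneser_2k_PST k : 1 <= k ->
  let u := repeat true k ++ repeat false k in
  PST_at bl_eqdec (kneser_vertices (2 * k) k) disjointb u (map negb u) (PI / 2).
Proof.
  intros Hk u.
  assert (Hu : In u (kneser_vertices (2 * k) k)).
  { apply In_kneser_vertices. unfold u.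
    rewrite length_app, card_true_app, !card_true_repeat, !repeat_length. lia. }
  assert (Hc : In (map negb u) (kneser_vertices (2 * k) k)).
  { apply In_kneser_vertices in Hu as [Lu Cu]. apply In_kneser_vertices.
    pose proof (card_true_map_negb u). rewrite length_map. lia. }
  apply PST_at_matched_pair; auto using disjointb_comm, NoDup_kneser_vertices.
  - unfold u. destruct k; [lia|]. discriminate.
  - intros w Hw. apply (kneser_2k_neighbour k); assumption.
  - intros w Hw. rewrite (kneser_2k_neighbour k), map_map, (map_ext _ _ negb_involutive), map_id
      by assumption. split; congruence.
Qed.

Theorem mainTheorem3 (n k : nat) (hk : (1 <= k)%nat) (hn : (2 * k <= n)%nat) :
  Kneser_admits_PST n k <-> n = (2 * k)%nat.
Proof.
  split.
  - intros (u & v & tau & HP).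
    destruct (Nat.eq_dec n (2 * k)) as [E|Hne]; [exact E|].
    exfalso. apply (kneser_no_PST n k u v tau hk); [lia|exact HP].
  - intros ->. eexists _, _, _. apply kneser_2k_PST, hk.
Qed.
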